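(* Let $M$ be a quasi-minimal Lorentz surface in the pseudo-Euclidean space $\mathbb{E}^4_2$. If $M$ has parallel mean curvature vector field, then $M$ has flat normal connection.
   Context: $\mathbb{E}^4_2$ is $\mathbb{R}^4$ with the metric $\langle\cdot,\cdot\rangle = dx_1^2+dx_2^2-dx_3^2-dx_4^2$. A Lorentz surface in $\mathbb{E}^4_2$ is an immersed surface whose induced metric is Lorentzian (signature $(1,1)$); its normal bundle then also carries a metric of signature $(1,1)$. Let $h$ be the second fundamental form, $D$ the normal connection and $H=\frac12\operatorname{tr}h$ the mean curvature vector field. The surface is quasi-minimal if $H$ is lightlike at every point, i.e. $H\neq 0$ and $\langle H,H\rangle=0$. The mean curvature vector field is parallel if $DH=0$ identically. The normal connection is flat if the curvature tensor of $D$ vanishes identically (equivalently, the normal curvature $\varkappa$ vanishes). *)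

From Stdlib Require Import Reals List.
From Coquelicot Require Import Coquelicot.
Open Scope R_scope.

Record V4 := mkV4 { c1 : R; c2 : R; c3 : R; c4 : R }.

Definition vzero : V4 := mkV4 0 0 0 0.
Definition vadd (a b : V4) : V4 :=
  mkV4 (c1 a + c1 b) (c2 a + c2 b) (c3 a + c3 b) (c4 a + c4 b).
Definition vscal (k : R) (a : V4) : V4 :=
  mkV4 (k * c1 a) (k * c2 a) (k * c3 a) (k * c4 a).
Definition vsub (a b : V4) : V4 := vadd a (vscal (-1) b).

Definition ip (a b : V4) : R :=
  c1 a * c1 b + c2 a * c2 b - c3 a * c3 b - c4 a * c4 b.

Definition pd (b : bool) (f : R * R -> R) (p : R * R) : R :=
  if b then Derive (fun t => f (t, snd p)) (fst p)
  else Derive (fun t => f (fst p, t)) (snd p).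

Fixpoint iterD (s : list bool) (f : R * R -> R) : R * R -> R :=
  match s with
  | nil => f
  | b :: s' => pd b (iterD s' f)
  end.

Definition smooth_on (U : R * R -> Prop) (f : R * R -> R) : Prop :=
  forall (s : list bool) (p : R * R), U p ->
    ex_derive (fun t => iterD s f (t, snd p)) (fst p) /\
    ex_derive (fun t => iterD s f (fst p, t)) (snd p) /\
    continuous (iterD s f) p.

Definition smoothV_on (U : R * R -> Prop) (F : R * R -> V4) : Prop :=
  smooth_on U (fun p => c1 (F p)) /\ smooth_on U (fun p => c2 (F p)) /\
  smooth_on U (fun p => c3 (F p)) /\ smooth_on U (fun p => c4 (F p)).

Definition vpd (b : bool) (F : R * R -> V4) (p : R * R) : V4 :=
  mkV4 (pd b (fun q => c1 (F q)) p) (pd b (fun q => c2 (F q)) p)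
       (pd b (fun q => c3 (F q)) p) (pd b (fun q => c4 (F q)) p).

Section Surface.
Variable x : R * R -> V4.

Definition xu := vpd true x.
Definition xv := vpd false x.

Definition g11 p := ip (xu p) (xu p).
Definition g12 p := ip (xu p) (xv p).
Definition g22 p := ip (xv p) (xv p).
Definition gdet p := g11 p * g22 p - g12 p * g12 p.

(** The induced metric is Lorentzian (signature (1,1)) at p;
    in particular x is an immersion at p. *)
Definition lorentzian_at p : Prop := gdet p < 0.

Definition gi11 p := g22 p / gdet p.
Definition gi12 p := - g12 p / gdet p.
Definition gi22 p := g11 p / gdet p.

Definition tanp p (v : V4) : V4 :=
  let a := ip v (xu p) in
  let b := ip v (xv p) in
  vadd (vscal (gi11 p * a + gi12 p * b) (xu p))
       (vscal (gi12 p * a + gi22 p * b) (xv p)).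
Definition norp p (v : V4) : V4 := vsub v (tanp p v).

Definition h11 p := norp p (vpd true xu p).
Definition h12 p := norp p (vpd false xu p).
Definition h22 p := norp p (vpd false xv p).

Definition Hmc p : V4 :=
  vscal (1/2) (vadd (vscal (gi11 p) (h11 p))
                 (vadd (vscal (2 * gi12 p) (h12 p)) (vscal (gi22 p) (h22 p)))).

Definition Dn (b : bool) (xi : R * R -> V4) (p : R * R) : V4 :=
  norp p (vpd b xi p).

Definition normal_field_on (U : R * R -> Prop) (xi : R * R -> V4) : Prop :=
  forall p, U p -> ip (xi p) (xu p) = 0 /\ ip (xi p) (xv p) = 0.
End Surface.

Definition lorentz_surface (U : R * R -> Prop) (x : R * R -> V4) : Prop :=
  open U /\ smoothV_on U x /\ forall p, U p -> lorentzian_at x p.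

Definition quasi_minimal (U : R * R -> Prop) (x : R * R -> V4) : Prop :=
  forall p, U p -> Hmc x p <> vzero /\ ip (Hmc x p) (Hmc x p) = 0.

(** DH = 0: D_X H = 0 for X = d/du and X = d/dv (hence for all X by linearity). *)
Definition parallel_mean_curvature (U : R * R -> Prop) (x : R * R -> V4) : Prop :=
  forall p, U p -> Dn x true (Hmc x) p = vzero /\ Dn x false (Hmc x) p = vzero.

(** Flat normal connection: R^D(d/du, d/dv) xi = D_u D_v xi - D_v D_u xi = 0
    (the bracket [d/du, d/dv] vanishes) for every smooth normal field xi. *)
Definition flat_normal_connection (U : R * R -> Prop) (x : R * R -> V4) : Prop :=
  forall xi : R * R -> V4, smoothV_on U xi -> normal_field_on x U xi ->
    forall p, U p ->
      Dn x true (Dn x false xi) p = Dn x false (Dn x true xi) p.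

From Stdlib Require Import Reals Lra Lia List.
From Coquelicot Require Import Coquelicot.
Open Scope R_scope.

(* The Ricci equation writes the normal curvature as
   R^D(∂u,∂v) ξ = - L ξ, where L ξ = h(A_ξ ∂u, ∂v) - h(A_ξ ∂v, ∂u) is a
   skew-adjoint endomorphism of the normal plane, whose metric has signature
   (1,1).  Applied to H, parallelism gives L H = 0.  For a normal ξ, skewness
   makes L ξ orthogonal to H and to ξ: if <H,ξ> <> 0 these two span the normal
   plane, so L ξ = 0; if <H,ξ> = 0 then ξ, being orthogonal to the lightlike
   H, is a multiple of H, and again L ξ = 0. *)

Section Smoothness.
Variable U : R * R -> Prop.
Hypothesis U_open : open U.

Definition partials_at (f : R * R -> R) (p : R * R) : Prop :=
  ex_derive (fun t => f (t, snd p)) (fst p) /\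
  ex_derive (fun t => f (fst p, t)) (snd p) /\
  continuous f p.

Definition eq_on (f g : R * R -> R) : Prop := forall q, U q -> f q = g q.

Definition smooth_upto (n : nat) (f : R * R -> R) : Prop :=
  forall s, (length s <= n)%nat -> forall p, U p -> partials_at (iterD s f) p.

Lemma locally_slices p : U p ->
  locally (fst p) (fun t => U (t, snd p)) /\ locally (snd p) (fun t => U (fst p, t)).
Proof.
  intros Hp; destruct p as [u v].
  assert (L : locally_2d (fun a b => U (a, b)) u v).
  { apply locally_2d_locally; eapply filter_imp; [|exact (U_open _ Hp)].
    now intros [a b]. }
  split; [exact (locally_2d_1d_const_y _ _ _ L) | exact (locally_2d_1d_const_x _ _ _ L)].
Qed.

Lemma pd_eq_on b f g p : eq_on f g -> U p -> pd b f p = pd b g p.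
Proof.
  intros E Hp; destruct (locally_slices p Hp) as [L1 L2].
  destruct b; apply Derive_ext_loc;
    [eapply filter_imp; [|exact L1] | eapply filter_imp; [|exact L2]];
    intros t Ht; exact (E _ Ht).
Qed.

Lemma iterD_eq_on s f g : eq_on f g -> eq_on (iterD s f) (iterD s g).
Proof.
  intros E; induction s as [|b s IH]; intros q Hq; simpl; [auto|].
  now apply pd_eq_on.
Qed.

Lemma partials_at_eq_on f g p : eq_on f g -> U p -> partials_at f p -> partials_at g p.
Proof.
  intros E Hp [Du [Dv C]]; destruct (locally_slices p Hp) as [L1 L2].
  split; [|split].
  - eapply ex_derive_ext_loc; [|exact Du].
    eapply filter_imp; [|exact L1]; intros t Ht; exact (E _ Ht).
  - eapply ex_derive_ext_loc; [|exact Dv].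
    eapply filter_imp; [|exact L2]; intros t Ht; exact (E _ Ht).
  - apply continuous_ext_loc with f; [|exact C].
    eapply filter_imp; [|exact (U_open p Hp)]; intros q Hq; exact (E q Hq).
Qed.

Lemma partials_at_const c p : partials_at (fun _ => c) p.
Proof. split; [|split]; [apply ex_derive_const.. | apply continuous_const]. Qed.

Lemma partials_at_plus f g p :
  partials_at f p -> partials_at g p -> partials_at (fun q => f q + g q) p.
Proof.
  intros [a1 [a2 a3]] [b1 [b2 b3]]; split; [|split].
  - apply (ex_derive_plus (fun t => f (t, snd p)) (fun t => g (t, snd p))); assumption.
  - apply (ex_derive_plus (fun t => f (fst p, t)) (fun t => g (fst p, t))); assumption.
  - apply (continuous_plus f g); assumption.
Qed.

Lemma partials_at_minus f g p :
  partials_at f p -> partials_at g p -> partials_at (fun q => f q - g q) p.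
Proof.
  intros [a1 [a2 a3]] [b1 [b2 b3]]; split; [|split].
  - apply (ex_derive_minus (fun t => f (t, snd p)) (fun t => g (t, snd p))); assumption.
  - apply (ex_derive_minus (fun t => f (fst p, t)) (fun t => g (fst p, t))); assumption.
  - apply (continuous_minus f g); assumption.
Qed.

Lemma partials_at_mult f g p :
  partials_at f p -> partials_at g p -> partials_at (fun q => f q * g q) p.
Proof.
  intros [a1 [a2 a3]] [b1 [b2 b3]]; split; [|split].
  - apply (ex_derive_mult (fun t => f (t, snd p)) (fun t => g (t, snd p))); assumption.
  - apply (ex_derive_mult (fun t => f (fst p, t)) (fun t => g (fst p, t))); assumption.
  - apply (continuous_mult f g); assumption.
Qed.

Lemma partials_at_inv g p : partials_at g p -> g p <> 0 -> partials_at (fun q => / g q) p.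
Proof.
  intros [b1 [b2 b3]] Hn; destruct p as [u v]; split; [|split].
  - now apply (ex_derive_inv (fun t => g (t, v))).
  - now apply (ex_derive_inv (fun t => g (u, t))).
  - apply (continuous_comp g (fun y : R => / y)); [assumption|].
    now apply continuous_Rinv.
Qed.

Lemma pd_const b c p : pd b (fun _ => c) p = 0.
Proof. destruct b; simpl; apply Derive_const. Qed.

Lemma pd_plus b f g p : partials_at f p -> partials_at g p ->
  pd b (fun q => f q + g q) p = pd b f p + pd b g p.
Proof.
  intros [a1 [a2 a3]] [b1 [b2 b3]]; destruct b.
  - exact (Derive_plus (fun t => f (t, snd p)) (fun t => g (t, snd p)) _ a1 b1).
  - exact (Derive_plus (fun t => f (fst p, t)) (fun t => g (fst p, t)) _ a2 b2).
Qed.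

Lemma pd_minus b f g p : partials_at f p -> partials_at g p ->
  pd b (fun q => f q - g q) p = pd b f p - pd b g p.
Proof.
  intros [a1 [a2 a3]] [b1 [b2 b3]]; destruct b.
  - exact (Derive_minus (fun t => f (t, snd p)) (fun t => g (t, snd p)) _ a1 b1).
  - exact (Derive_minus (fun t => f (fst p, t)) (fun t => g (fst p, t)) _ a2 b2).
Qed.

Lemma pd_mult b f g p : partials_at f p -> partials_at g p ->
  pd b (fun q => f q * g q) p = pd b f p * g p + f p * pd b g p.
Proof.
  intros [a1 [a2 a3]] [b1 [b2 b3]]; destruct b, p as [u v]; simpl in *.
  - exact (Derive_mult (fun t => f (t, v)) (fun t => g (t, v)) u a1 b1).
  - exact (Derive_mult (fun t => f (u, t)) (fun t => g (u, t)) v a2 b2).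
Qed.

Lemma pd_inv b g p : partials_at g p -> g p <> 0 ->
  pd b (fun q => / g q) p = - pd b g p * (/ g p * / g p).
Proof.
  intros [a1 [a2 _]] Hn; destruct b, p as [u v]; simpl in *.
  - rewrite (Derive_inv (fun t => g (t, v)) u a1 Hn); field; exact Hn.
  - rewrite (Derive_inv (fun t => g (u, t)) v a2 Hn); field; exact Hn.
Qed.

Lemma pd_eq0_on b f p : (forall q, U q -> f q = 0) -> U p -> pd b f p = 0.
Proof.
  intros H Hp; rewrite (pd_eq_on b f (fun _ => 0) p H Hp); apply pd_const.
Qed.

Lemma iterD_snoc s b f : iterD (s ++ b :: nil) f = iterD s (pd b f).
Proof. induction s as [|c s IH]; simpl; [|rewrite IH]; reflexivity. Qed.

Lemma smooth_upto_eq_on n f g : smooth_upto n f -> eq_on f g -> smooth_upto n g.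
Proof.
  intros H E s Hs p Hp; apply partials_at_eq_on with (iterD s f); auto.
  now apply iterD_eq_on.
Qed.

Lemma smooth_upto_pd n b f : smooth_upto (S n) f -> smooth_upto n (pd b f).
Proof.
  intros H s Hs p Hp; rewrite <- iterD_snoc; apply H; auto.
  rewrite length_app; simpl; lia.
Qed.

Lemma smooth_upto_S_le n f : smooth_upto (S n) f -> smooth_upto n f.
Proof. intros H s Hs; apply H; lia. Qed.

Lemma smooth_upto_partials n f p : smooth_upto n f -> U p -> partials_at f p.
Proof. intros H; apply (H nil); simpl; lia. Qed.

Lemma smooth_upto_intro n f : (forall p, U p -> partials_at f p) ->
  (forall m b, n = S m -> smooth_upto m (pd b f)) -> smooth_upto n f.
Proof.
  intros H0 H s Hs p Hp; destruct s as [|c s0] using rev_ind; [now apply H0|].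
  rewrite length_app in Hs; simpl in Hs.
  rewrite iterD_snoc; destruct n as [|m]; [lia|].
  apply (H m); auto; lia.
Qed.

Lemma smooth_upto_const n c : smooth_upto n (fun _ => c).
Proof.
  revert c; induction n as [|n IH]; intros c;
    (apply smooth_upto_intro; [intros; apply partials_at_const | intros m b Hm]);
    inversion Hm; subst m.
  apply smooth_upto_eq_on with (fun _ => 0); [apply IH|].
  intros q _; symmetry; apply pd_const.
Qed.

Lemma smooth_upto_plus n f g :
  smooth_upto n f -> smooth_upto n g -> smooth_upto n (fun q => f q + g q).
Proof.
  revert f g; induction n as [|n IH]; intros f g Hf Hg;
    (apply smooth_upto_intro; [intros p Hp | intros m b Hm; inversion Hm; subst m]).
  1, 2: apply partials_at_plus; eapply smooth_upto_partials; eassumption.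
  apply smooth_upto_eq_on with (fun q => pd b f q + pd b g q).
  - apply IH; now apply smooth_upto_pd.
  - intros q Hq; symmetry; apply pd_plus; eapply smooth_upto_partials; eassumption.
Qed.

Lemma smooth_upto_mult n f g :
  smooth_upto n f -> smooth_upto n g -> smooth_upto n (fun q => f q * g q).
Proof.
  revert f g; induction n as [|n IH]; intros f g Hf Hg;
    (apply smooth_upto_intro; [intros p Hp | intros m b Hm; inversion Hm; subst m]).
  1, 2: apply partials_at_mult; eapply smooth_upto_partials; eassumption.
  apply smooth_upto_eq_on with (fun q => pd b f q * g q + f q * pd b g q).
  - apply smooth_upto_plus; apply IH.
    + now apply smooth_upto_pd.
    + now apply smooth_upto_S_le.
    + now apply smooth_upto_S_le.
    + now apply smooth_upto_pd.
  - intros q Hq; symmetry; apply pd_mult; eapply smooth_upto_partials; eassumption.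
Qed.

Lemma smooth_upto_inv n g : smooth_upto n g -> (forall q, U q -> g q <> 0) ->
  smooth_upto n (fun q => / g q).
Proof.
  revert g; induction n as [|n IH]; intros g Hg Hn;
    (apply smooth_upto_intro; [intros p Hp | intros m b Hm; inversion Hm; subst m]).
  1, 2: apply partials_at_inv; [eapply smooth_upto_partials; eassumption | exact (Hn p Hp)].
  apply smooth_upto_eq_on with (fun q => - pd b g q * (/ g q * / g q)).
  - assert (Hi := IH g (smooth_upto_S_le _ _ Hg) Hn).
    apply smooth_upto_mult; [|now apply smooth_upto_mult].
    apply smooth_upto_eq_on with (fun q => -1 * pd b g q); [|intros q _; ring].
    apply smooth_upto_mult; [apply smooth_upto_const | now apply smooth_upto_pd].
  - intros q Hq; symmetry.
    apply pd_inv; [eapply smooth_upto_partials; eassumption | exact (Hn q Hq)].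
Qed.

Lemma smooth_on_upto f : smooth_on U f <-> forall n, smooth_upto n f.
Proof.
  split; [intros H n s _ p Hp; now apply H | intros H s p Hp; now apply (H (length s))].
Qed.

Lemma smooth_on_const c : smooth_on U (fun _ => c).
Proof. apply smooth_on_upto; intros; apply smooth_upto_const. Qed.

Lemma smooth_on_plus f g : smooth_on U f -> smooth_on U g -> smooth_on U (fun q => f q + g q).
Proof. rewrite !smooth_on_upto; intros; now apply smooth_upto_plus. Qed.

Lemma smooth_on_mult f g : smooth_on U f -> smooth_on U g -> smooth_on U (fun q => f q * g q).
Proof. rewrite !smooth_on_upto; intros; now apply smooth_upto_mult. Qed.

Lemma smooth_on_ext f g : smooth_on U f -> (forall q, f q = g q) -> smooth_on U g.
Proof.
  rewrite !smooth_on_upto; intros H E n; apply smooth_upto_eq_on with f; auto.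
  intros q _; apply E.
Qed.

Lemma smooth_on_opp f : smooth_on U f -> smooth_on U (fun q => - f q).
Proof.
  intros Hf; apply smooth_on_ext with (fun q => -1 * f q); [|intros; ring].
  apply smooth_on_mult; [apply smooth_on_const | exact Hf].
Qed.

Lemma smooth_on_minus f g : smooth_on U f -> smooth_on U g -> smooth_on U (fun q => f q - g q).
Proof. intros Hf Hg; apply smooth_on_plus; [exact Hf | now apply smooth_on_opp]. Qed.

Lemma smooth_on_div f g : smooth_on U f -> smooth_on U g -> (forall q, U q -> g q <> 0) ->
  smooth_on U (fun q => f q / g q).
Proof.
  intros Hf Hg Hn; apply smooth_on_mult; [exact Hf|].
  revert Hg; rewrite !smooth_on_upto; intros Hg n; now apply smooth_upto_inv.
Qed.

Lemma smooth_on_pd b f : smooth_on U f -> smooth_on U (pd b f).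
Proof. rewrite !smooth_on_upto; intros H n; now apply smooth_upto_pd. Qed.

Lemma smooth_on_partials f p : smooth_on U f -> U p -> partials_at f p.
Proof. intros H; apply (H nil). Qed.

Lemma pd_comm f p : smooth_on U f -> U p -> pd true (pd false f) p = pd false (pd true f) p.
Proof.
  intros Hf Hp; destruct p as [u v]; unfold pd; simpl.
  assert (C : forall s, continuity_2d_pt (fun a b => iterD s f (a, b)) u v).
  { intros s; apply continuity_2d_pt_filterlim.
    destruct (Hf s (u, v) Hp) as [_ [_ C]].
    eapply filterlim_ext; [|exact C]; now intros [a b]. }
  apply (Schwarz (fun a b => f (a, b)) u v);
    [| exact (C (true :: false :: nil)) | exact (C (false :: true :: nil))].
  assert (L : locally_2d (fun a b => U (a, b)) u v).
  { apply locally_2d_locally; eapply filter_imp; [|exact (U_open _ Hp)]; now intros [a b]. }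
  eapply locally_2d_impl; [|exact L].
  apply locally_2d_locally, filter_forall; intros [a b] Hab.
  destruct (Hf nil (a, b) Hab) as [E1 [E2 _]].
  destruct (Hf (false :: nil) (a, b) Hab) as [F1 _].
  destruct (Hf (true :: nil) (a, b) Hab) as [_ [G2 _]].
  simpl in *; tauto.
Qed.

End Smoothness.

Ltac smooth_on_arith :=
  repeat match goal with
  | |- _ => assumption
  | |- smooth_on _ (fun q => _ + _) => apply smooth_on_plus
  | |- smooth_on _ (fun q => _ - _) => apply smooth_on_minus
  | |- smooth_on _ (fun q => _ * _) => apply smooth_on_mult
  | |- smooth_on _ (fun q => _ / _) => apply smooth_on_div
  | |- smooth_on _ (fun q => - _) => apply smooth_on_opp
  | |- smooth_on _ (fun _ => ?c) => apply smooth_on_const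
  end.

Lemma V4_ext a b : c1 a = c1 b -> c2 a = c2 b -> c3 a = c3 b -> c4 a = c4 b -> a = b.
Proof. destruct a, b; simpl; intros; subst; reflexivity. Qed.

Section SmoothFields.
Variable U : R * R -> Prop.
Hypothesis U_open : open U.

Lemma smoothV_vpd b F : smoothV_on U F -> smoothV_on U (vpd b F).
Proof.
  intros [F1 [F2 [F3 F4]]]; split; [|split; [|split]]; now apply smooth_on_pd.
Qed.

Lemma smooth_on_ip F G : smoothV_on U F -> smoothV_on U G ->
  smooth_on U (fun q => ip (F q) (G q)).
Proof. intros [F1 [F2 [F3 F4]]] [G1 [G2 [G3 G4]]]; unfold ip; smooth_on_arith. Qed.

Lemma smoothV_add F G : smoothV_on U F -> smoothV_on U G ->
  smoothV_on U (fun q => vadd (F q) (G q)).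
Proof.
  intros [F1 [F2 [F3 F4]]] [G1 [G2 [G3 G4]]].
  split; [|split; [|split]]; simpl; smooth_on_arith.
Qed.

Lemma smoothV_scal f F : smooth_on U f -> smoothV_on U F ->
  smoothV_on U (fun q => vscal (f q) (F q)).
Proof.
  intros Hf [F1 [F2 [F3 F4]]]; split; [|split; [|split]]; simpl; smooth_on_arith.
Qed.

Lemma smoothV_sub F G : smoothV_on U F -> smoothV_on U G ->
  smoothV_on U (fun q => vsub (F q) (G q)).
Proof.
  intros HF HG; apply smoothV_add; [exact HF|].
  apply smoothV_scal; [apply smooth_on_const; exact U_open | exact HG].
Qed.

Variable x : R * R -> V4.
Hypothesis x_smooth : smoothV_on U x.
Hypothesis gdet_neq0 : forall q, U q -> gdet x q <> 0.

Lemma smoothV_xu : smoothV_on U (xu x).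
Proof. now apply smoothV_vpd. Qed.

Lemma smoothV_xv : smoothV_on U (xv x).
Proof. now apply smoothV_vpd. Qed.

Lemma smooth_on_ginv :
  smooth_on U (gi11 x) /\ smooth_on U (gi12 x) /\ smooth_on U (gi22 x).
Proof.
  assert (S11 := smooth_on_ip _ _ smoothV_xu smoothV_xu).
  assert (S12 := smooth_on_ip _ _ smoothV_xu smoothV_xv).
  assert (S22 := smooth_on_ip _ _ smoothV_xv smoothV_xv).
  unfold gi11, gi12, gi22, gdet, g11, g12, g22; split; [|split]; smooth_on_arith.
Qed.

Definition tcoef_u (W : R * R -> V4) q :=
  gi11 x q * ip (W q) (xu x q) + gi12 x q * ip (W q) (xv x q).
Definition tcoef_v (W : R * R -> V4) q :=
  gi12 x q * ip (W q) (xu x q) + gi22 x q * ip (W q) (xv x q).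

Lemma smooth_on_tcoef W : smoothV_on U W ->
  smooth_on U (tcoef_u W) /\ smooth_on U (tcoef_v W).
Proof.
  intros HW; destruct smooth_on_ginv as [S11 [S12 S22]].
  assert (Su := smooth_on_ip _ _ HW smoothV_xu).
  assert (Sv := smooth_on_ip _ _ HW smoothV_xv).
  unfold tcoef_u, tcoef_v; split; smooth_on_arith.
Qed.

Lemma smoothV_norp W : smoothV_on U W -> smoothV_on U (fun q => norp x q (W q)).
Proof.
  intros HW; destruct (smooth_on_tcoef W HW) as [Su Sv].
  apply smoothV_sub; [exact HW|].
  apply smoothV_add; apply smoothV_scal; auto using smoothV_xu, smoothV_xv.
Qed.

Lemma smoothV_Hmc : smoothV_on U (Hmc x).
Proof.
  destruct smooth_on_ginv as [S11 [S12 S22]].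
  assert (Sh : forall b F, smoothV_on U F -> smoothV_on U (fun q => norp x q (vpd b F q)))
    by (intros; now apply smoothV_norp, smoothV_vpd).
  apply smoothV_scal; [apply smooth_on_const; exact U_open|].
  apply smoothV_add; [|apply smoothV_add]; apply smoothV_scal.
  - exact S11.
  - apply Sh, smoothV_xu.
  - smooth_on_arith.
  - apply Sh, smoothV_xu.
  - exact S22.
  - apply Sh, smoothV_xv.
Qed.

End SmoothFields.

Lemma ip_sym a b : ip a b = ip b a.
Proof. unfold ip; ring. Qed.
Lemma ip_zerol a : ip vzero a = 0.
Proof. unfold ip; simpl; ring. Qed.
Lemma ip_addl a b c : ip (vadd a b) c = ip a c + ip b c.
Proof. unfold ip; simpl; ring. Qed.
Lemma ip_addr a b c : ip c (vadd a b) = ip c a + ip c b.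
Proof. unfold ip; simpl; ring. Qed.
Lemma ip_scall k a c : ip (vscal k a) c = k * ip a c.
Proof. unfold ip; simpl; ring. Qed.
Lemma ip_scalr k a c : ip c (vscal k a) = k * ip c a.
Proof. unfold ip; simpl; ring. Qed.
Lemma ip_subl a b c : ip (vsub a b) c = ip a c - ip b c.
Proof. unfold ip; simpl; ring. Qed.
Lemma ip_subr a b c : ip c (vsub a b) = ip c a - ip c b.
Proof. unfold ip; simpl; ring. Qed.

Section NormalProjection.
Variables (x : R * R -> V4) (p : R * R).

Lemma norp_add a b : norp x p (vadd a b) = vadd (norp x p a) (norp x p b).
Proof. apply V4_ext; unfold norp, tanp, ip; simpl; ring. Qed.
Lemma norp_scal k a : norp x p (vscal k a) = vscal k (norp x p a).
Proof. apply V4_ext; unfold norp, tanp, ip; simpl; ring. Qed.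
Lemma norp_sub a b : norp x p (vsub a b) = vsub (norp x p a) (norp x p b).
Proof. unfold vsub; now rewrite norp_add, norp_scal. Qed.
Lemma norp_zero : norp x p vzero = vzero.
Proof. apply V4_ext; unfold norp, tanp, ip; simpl; ring. Qed.

Lemma ip_norp_of_normal n v : ip n (xu x p) = 0 -> ip n (xv x p) = 0 ->
  ip n (norp x p v) = ip n v.
Proof.
  intros Hu Hv; unfold norp, tanp; rewrite ip_subr, ip_addr, !ip_scalr, Hu, Hv; ring.
Qed.

Hypothesis gdet_neq0 : gdet x p <> 0.

Lemma norp_tangent :
  norp x p (xu x p) = vzero /\ norp x p (xv x p) = vzero.
Proof.
  revert gdet_neq0; unfold norp, tanp, gi11, gi12, gi22, gdet, g11, g12, g22.
  generalize (xu x p) (xv x p); intros [a1 a2 a3 a4] [b1 b2 b3 b4] Hd.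
  unfold ip in *; split; apply V4_ext; simpl; field; exact Hd.
Qed.

Lemma ip_norp_tangent v :
  ip (norp x p v) (xu x p) = 0 /\ ip (norp x p v) (xv x p) = 0.
Proof.
  revert gdet_neq0; unfold norp, tanp, gi11, gi12, gi22, gdet, g11, g12, g22.
  generalize (xu x p) (xv x p); intros [a1 a2 a3 a4] [b1 b2 b3 b4] Hd.
  destruct v; unfold ip in *; simpl; split; field; exact Hd.
Qed.

Lemma Hmc_normal : ip (Hmc x p) (xu x p) = 0 /\ ip (Hmc x p) (xv x p) = 0.
Proof.
  unfold Hmc, h11, h12, h22; rewrite !ip_scall, !ip_addl, !ip_scall.
  rewrite !(proj1 (ip_norp_tangent _)), !(proj2 (ip_norp_tangent _)); split; ring.
Qed.

End NormalProjection.

(* [shape_comm g^11 g^12 g^22 h11 h12 h22 n] is h(A_n ∂u, ∂v) - h(A_n ∂v, ∂u),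
   with A_n ∂_i = g^{jk} <h_ij, n> ∂_k the shape operator. *)
Definition shape_comm (a11 a12 a22 : R) (h1 h2 h3 n : V4) : V4 :=
  vsub (vadd (vscal (-(a11 * ip n h2 + a12 * ip n h3)) h1)
             (vscal (-(a12 * ip n h2 + a22 * ip n h3)) h2))
       (vadd (vscal (-(a11 * ip n h1 + a12 * ip n h2)) h2)
             (vscal (-(a12 * ip n h1 + a22 * ip n h2)) h3)).

Definition shape_comm_at x p : V4 -> V4 :=
  shape_comm (gi11 x p) (gi12 x p) (gi22 x p) (h11 x p) (h12 x p) (h22 x p).

Ltac partials_arith :=
  repeat match goal with
  | |- _ => assumption
  | |- partials_at (fun q => _ + _) _ => apply partials_at_plus
  | |- partials_at (fun q => _ - _) _ => apply partials_at_minus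
  | |- partials_at (fun q => _ * _) _ => apply partials_at_mult
  | |- partials_at (fun _ => ?c) _ => apply partials_at_const
  | |- partials_at _ _ => eapply smooth_on_partials; eassumption
  end.

Lemma pd_sub_comb b w a X c Y p :
  partials_at w p -> partials_at a p -> partials_at X p -> partials_at c p -> partials_at Y p ->
  pd b (fun q => w q + -1 * (a q * X q + c q * Y q)) p =
  pd b w p + -1 * (pd b a p * X p + a p * pd b X p + (pd b c p * Y p + c p * pd b Y p)).
Proof.
  intros Bw Ba BX Bc BY.
  rewrite pd_plus, pd_mult, pd_const, pd_plus, !pd_mult by partials_arith.
  ring.
Qed.

Section RicciEquation.
Variable U : R * R -> Prop.
Hypothesis U_open : open U.
Variable x : R * R -> V4.
Hypothesis x_smooth : smoothV_on U x.
Hypothesis gdet_neq0 : forall q, U q -> gdet x q <> 0.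

Lemma pd_ip b F G p : smoothV_on U F -> smoothV_on U G -> U p ->
  pd b (fun q => ip (F q) (G q)) p = ip (vpd b F p) (G p) + ip (F p) (vpd b G p).
Proof.
  intros [F1 [F2 [F3 F4]]] [G1 [G2 [G3 G4]]] Hp; unfold ip; simpl.
  rewrite !pd_minus, !pd_plus, !pd_mult by partials_arith; ring.
Qed.

Lemma ip_pd_of_orthogonal b N Y p : smoothV_on U N -> smoothV_on U Y ->
  (forall q, U q -> ip (N q) (Y q) = 0) -> U p ->
  ip (vpd b N p) (Y p) = - ip (N p) (vpd b Y p).
Proof.
  intros HN HY H0 Hp; pose proof (pd_ip b N Y p HN HY Hp) as E.
  rewrite (pd_eq0_on U U_open b _ p H0 Hp) in E; lra.
Qed.

Lemma vpd_comm F p : smoothV_on U F -> U p ->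
  vpd true (vpd false F) p = vpd false (vpd true F) p.
Proof.
  intros [F1 [F2 [F3 F4]]] Hp; apply V4_ext; unfold vpd; cbn [c1 c2 c3 c4];
    now apply (pd_comm U U_open).
Qed.

Lemma vpd_norp b W p : smoothV_on U W -> U p ->
  vpd b (fun q => norp x q (W q)) p =
  vsub (vpd b W p)
    (vadd (vadd (vscal (pd b (tcoef_u x W) p) (xu x p)) (vscal (tcoef_u x W p) (vpd b (xu x) p)))
          (vadd (vscal (pd b (tcoef_v x W) p) (xv x p)) (vscal (tcoef_v x W p) (vpd b (xv x) p)))).
Proof.
  intros HW Hp.
  destruct (smooth_on_tcoef U U_open x x_smooth gdet_neq0 W HW) as [Su Sv].
  destruct HW as [W1 [W2 [W3 W4]]].
  destruct (smoothV_xu U x x_smooth) as [X1 [X2 [X3 X4]]].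
  destruct (smoothV_xv U x x_smooth) as [Y1 [Y2 [Y3 Y4]]].
  apply V4_ext; simpl;
    refine (pd_sub_comb b _ (tcoef_u x W) _ (tcoef_v x W) _ p _ _ _ _ _); partials_arith.
Qed.

Lemma Dn_norp b W p : smoothV_on U W -> U p ->
  norp x p (vpd b (fun q => norp x q (W q)) p) =
  vsub (norp x p (vpd b W p))
       (vadd (vscal (tcoef_u x W p) (norp x p (vpd b (xu x) p)))
             (vscal (tcoef_v x W p) (norp x p (vpd b (xv x) p)))).
Proof.
  intros HW Hp; destruct (norp_tangent x p (gdet_neq0 p Hp)) as [Nu Nv].
  rewrite vpd_norp, norp_sub, !norp_add, !norp_scal, Nu, Nv by assumption.
  apply V4_ext; simpl; ring.
Qed.

(* The third derivatives of N cancel by Schwarz, and the derivatives of the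
   tangential coefficients of N are turned into second fundamental forms
   through <∂N, x_i> = - <N, ∂x_i>. *)
Lemma ricci_equation N p : smoothV_on U N -> normal_field_on x U N -> U p ->
  Dn x true (Dn x false N) p = vsub (Dn x false (Dn x true N) p) (shape_comm_at x p (N p)).
Proof.
  intros HN Hn Hp; unfold Dn.
  rewrite (Dn_norp true (vpd false N)), (Dn_norp false (vpd true N)), vpd_comm
    by (assumption || now apply smoothV_vpd).
  assert (Sx : vpd true (xv x) p = vpd false (xu x) p) by now apply vpd_comm.
  assert (Nu : forall q, U q -> ip (N q) (xu x q) = 0) by (intros q Hq; apply (Hn q Hq)).
  assert (Nv : forall q, U q -> ip (N q) (xv x q) = 0) by (intros q Hq; apply (Hn q Hq)).
  unfold tcoef_u, tcoef_v; rewrite !Sx.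
  rewrite !(ip_pd_of_orthogonal _ N (xu x) p HN (smoothV_xu U x x_smooth) Nu Hp).
  rewrite !(ip_pd_of_orthogonal _ N (xv x) p HN (smoothV_xv U x x_smooth) Nv Hp).
  rewrite !Sx.
  destruct (Hn p Hp) as [Np1 Np2].
  rewrite <- (ip_norp_of_normal x p (N p) (vpd true (xu x) p) Np1 Np2),
    <- (ip_norp_of_normal x p (N p) (vpd false (xu x) p) Np1 Np2),
    <- (ip_norp_of_normal x p (N p) (vpd false (xv x) p) Np1 Np2).
  fold (h11 x p) (h12 x p) (h22 x p).
  unfold shape_comm_at, shape_comm.
  generalize (norp x p (vpd false (vpd true N) p)) (h11 x p) (h12 x p) (h22 x p) (N p)
    (gi11 x p) (gi12 x p) (gi22 x p).
  intros [a1 a2 a3 a4] [b1 b2 b3 b4] [c1 c2 c3 c4] [d1 d2 d3 d4] [e1 e2 e3 e4] r1 r2 r3.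
  apply V4_ext; unfold ip; simpl; ring.
Qed.

End RicciEquation.

Definition det3 a b c d e f g h i := a * (e * i - f * h) - b * (d * i - f * g) + c * (d * h - e * g).
Definition det4 m11 m12 m13 m14 m21 m22 m23 m24 m31 m32 m33 m34 m41 m42 m43 m44 :=
  m11 * det3 m22 m23 m24 m32 m33 m34 m42 m43 m44
  - m12 * det3 m21 m23 m24 m31 m33 m34 m41 m43 m44
  + m13 * det3 m21 m22 m24 m31 m32 m34 m41 m42 m44
  - m14 * det3 m21 m22 m23 m31 m32 m33 m41 m42 m43.
Definition det4_rows a b c d :=
  det4 (c1 a) (c2 a) (c3 a) (c4 a) (c1 b) (c2 b) (c3 b) (c4 b)
       (c1 c) (c2 c) (c3 c) (c4 c) (c1 d) (c2 d) (c3 d) (c4 d).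

(* The Gram matrix of the rows A is A η A^T, and det η = 1. *)
Lemma det4_rows_sq a b c d : det4_rows a b c d * det4_rows a b c d =
  det4 (ip a a) (ip a b) (ip a c) (ip a d) (ip b a) (ip b b) (ip b c) (ip b d)
       (ip c a) (ip c b) (ip c c) (ip c d) (ip d a) (ip d b) (ip d c) (ip d d).
Proof. destruct a, b, c, d; unfold det4_rows, det4, det3, ip; simpl; ring. Qed.

Lemma det4_rows_cramer a b c d w :
  det4_rows a b c d * c1 w =
    det4 (ip w a) (c2 a) (c3 a) (c4 a) (ip w b) (c2 b) (c3 b) (c4 b)
         (ip w c) (c2 c) (c3 c) (c4 c) (ip w d) (c2 d) (c3 d) (c4 d) /\
  det4_rows a b c d * c2 w =
    det4 (c1 a) (ip w a) (c3 a) (c4 a) (c1 b) (ip w b) (c3 b) (c4 b)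
         (c1 c) (ip w c) (c3 c) (c4 c) (c1 d) (ip w d) (c3 d) (c4 d) /\
  det4_rows a b c d * (- c3 w) =
    det4 (c1 a) (c2 a) (ip w a) (c4 a) (c1 b) (c2 b) (ip w b) (c4 b)
         (c1 c) (c2 c) (ip w c) (c4 c) (c1 d) (c2 d) (ip w d) (c4 d) /\
  det4_rows a b c d * (- c4 w) =
    det4 (c1 a) (c2 a) (c3 a) (ip w a) (c1 b) (c2 b) (c3 b) (ip w b)
         (c1 c) (c2 c) (c3 c) (ip w c) (c1 d) (c2 d) (c3 d) (ip w d).
Proof.
  destruct a, b, c, d, w; unfold det4_rows, det4, det3, ip; simpl; repeat split; ring.
Qed.

Lemma orthogonal_rows_zero a b c d w : det4_rows a b c d <> 0 ->
  ip w a = 0 -> ip w b = 0 -> ip w c = 0 -> ip w d = 0 -> w = vzero.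
Proof.
  intros D Ha Hb Hc Hd.
  destruct (det4_rows_cramer a b c d w) as [E1 [E2 [E3 E4]]].
  rewrite Ha, Hb, Hc, Hd in E1, E2, E3, E4; unfold det4, det3 in E1, E2, E3, E4.
  ring_simplify in E1; ring_simplify in E2; ring_simplify in E3; ring_simplify in E4.
  apply V4_ext; simpl; apply (Rmult_eq_reg_l (det4_rows a b c d)); auto; lra.
Qed.

Section NormalPlane.
Variables a b H : V4.
Hypothesis tangent_nondeg : ip a a * ip b b - ip a b * ip a b <> 0.
Hypotheses (Ha : ip H a = 0) (Hb : ip H b = 0) (HH : ip H H = 0).

Lemma det4_rows_frame_neq0 k : ip k a = 0 -> ip k b = 0 -> ip H k <> 0 ->
  det4_rows a b H k <> 0.
Proof.
  intros ka kb Hk D0; assert (G := det4_rows_sq a b H k).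
  rewrite D0, (ip_sym b a), (ip_sym a H), (ip_sym b H), (ip_sym a k), (ip_sym b k),
    (ip_sym k H), Ha, Hb, HH, ka, kb in G.
  assert (E : (ip a a * ip b b - ip a b * ip a b) * (ip H k * ip H k) = 0)
    by (unfold det4, det3 in G; lra).
  apply Rmult_integral in E; destruct E as [E|E]; [contradiction|].
  apply Rmult_integral in E; destruct E; contradiction.
Qed.

Lemma normal_orthogonal_lightlike k n : ip k a = 0 -> ip k b = 0 -> ip H k <> 0 ->
  ip n a = 0 -> ip n b = 0 -> ip H n = 0 -> n = vscal (ip n k / ip H k) H.
Proof.
  intros ka kb Hk na nb Hn.
  assert (E : vsub n (vscal (ip n k / ip H k) H) = vzero).
  { apply (orthogonal_rows_zero a b H k); [now apply det4_rows_frame_neq0 | ..];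
      rewrite ip_subl, ip_scall.
    - rewrite na, Ha; ring.
    - rewrite nb, Hb; ring.
    - rewrite ip_sym, Hn, HH; ring.
    - field; exact Hk. }
  apply V4_ext; apply (f_equal c1) in E as e1; apply (f_equal c2) in E as e2;
    apply (f_equal c3) in E as e3; apply (f_equal c4) in E as e4; simpl in *; lra.
Qed.

Lemma skew_normal_endo_vanishes (L : V4 -> V4) k n :
  (forall u v, ip (L u) v = - ip u (L v)) ->
  (forall c u, L (vscal c u) = vscal c (L u)) ->
  (forall u, ip (L u) a = 0 /\ ip (L u) b = 0) ->
  L H = vzero -> ip k a = 0 -> ip k b = 0 -> ip H k <> 0 ->
  ip n a = 0 -> ip n b = 0 -> L n = vzero.
Proof.
  intros Lskew Lscal Lnormal LH ka kb Hk na nb.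
  destruct (Req_dec (ip H n) 0) as [Hn|Hn].
  - rewrite (normal_orthogonal_lightlike k n ka kb Hk na nb Hn), Lscal, LH.
    apply V4_ext; simpl; ring.
  - destruct (Lnormal n) as [Lna Lnb].
    apply (orthogonal_rows_zero a b H n); [now apply det4_rows_frame_neq0 | auto | auto | |].
    + rewrite Lskew, LH, ip_sym, ip_zerol; ring.
    + assert (S := Lskew n n); rewrite (ip_sym n) in S; lra.
Qed.

End NormalPlane.

Lemma shape_comm_skew a11 a12 a22 h1 h2 h3 n m :
  ip (shape_comm a11 a12 a22 h1 h2 h3 n) m = - ip n (shape_comm a11 a12 a22 h1 h2 h3 m).
Proof. destruct h1, h2, h3, n, m; unfold shape_comm, ip; simpl; ring. Qed.

Lemma shape_comm_scal a11 a12 a22 h1 h2 h3 c n :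
  shape_comm a11 a12 a22 h1 h2 h3 (vscal c n) = vscal c (shape_comm a11 a12 a22 h1 h2 h3 n).
Proof. destruct h1, h2, h3, n; apply V4_ext; unfold shape_comm, ip; simpl; ring. Qed.

Lemma shape_comm_orthogonal a11 a12 a22 h1 h2 h3 n t :
  ip h1 t = 0 -> ip h2 t = 0 -> ip h3 t = 0 -> ip (shape_comm a11 a12 a22 h1 h2 h3 n) t = 0.
Proof.
  intros E1 E2 E3; unfold shape_comm; rewrite ip_subl, !ip_addl, !ip_scall, E1, E2, E3; ring.
Qed.

Definition eucl_dual (v : V4) : V4 := mkV4 (c1 v) (c2 v) (- c3 v) (- c4 v).

Lemma ip_eucl_dual_neq0 v : v <> vzero -> ip v (eucl_dual v) <> 0.
Proof.
  destruct v as [v1 v2 v3 v4]; unfold ip, eucl_dual; simpl; intros Hv E; apply Hv.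
  assert (v1 * v1 = 0) by nra; assert (v2 * v2 = 0) by nra.
  assert (v3 * v3 = 0) by nra; assert (v4 * v4 = 0) by nra.
  unfold vzero; f_equal; nra.
Qed.

Lemma shape_comm_at_vanishes x p n :
  gdet x p <> 0 -> Hmc x p <> vzero -> ip (Hmc x p) (Hmc x p) = 0 ->
  shape_comm_at x p (Hmc x p) = vzero ->
  ip n (xu x p) = 0 -> ip n (xv x p) = 0 -> shape_comm_at x p n = vzero.
Proof.
  intros Hd Hnz HH LH nu nv.
  set (H := Hmc x p) in *.
  destruct (Hmc_normal x p Hd) as [Hu Hv].
  assert (Th := fun v => ip_norp_tangent x p Hd v).
  apply (skew_normal_endo_vanishes (xu x p) (xv x p) H Hd Hu Hv HH
           (shape_comm_at x p) (norp x p (eucl_dual H)) n); try apply Th; auto.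
  - intros u v; apply shape_comm_skew.
  - intros c u; apply shape_comm_scal.
  - intros u; split; apply shape_comm_orthogonal; apply Th.
  - rewrite ip_norp_of_normal by assumption; now apply ip_eucl_dual_neq0.
Qed.

Lemma Dn_eq0_on U x b F p : open U -> (forall q, U q -> F q = vzero) -> U p ->
  Dn x b F p = vzero.
Proof.
  intros U_open HF Hp; unfold Dn.
  replace (vpd b F p) with vzero; [apply norp_zero|].
  apply V4_ext; simpl; symmetry; apply (pd_eq0_on U U_open); auto;
    intros q Hq; now rewrite (HF q Hq).
Qed.

Lemma shape_comm_at_Hmc U x p : open U -> smoothV_on U x ->
  (forall q, U q -> gdet x q <> 0) -> parallel_mean_curvature U x -> U p ->
  shape_comm_at x p (Hmc x p) = vzero.
Proof.
  intros U_open x_smooth Hd Hpar Hp.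
  assert (R := ricci_equation U U_open x x_smooth Hd (Hmc x) p (smoothV_Hmc U U_open x x_smooth Hd)
                 (fun q Hq => Hmc_normal x q (Hd q Hq)) Hp).
  assert (DH : forall b b', Dn x b (Dn x b' (Hmc x)) p = vzero).
  { intros b b'; apply (Dn_eq0_on U); auto.
    intros q Hq; destruct b'; apply (Hpar q Hq). }
  rewrite !DH in R.
  apply V4_ext; apply (f_equal c1) in R as e1; apply (f_equal c2) in R as e2;
    apply (f_equal c3) in R as e3; apply (f_equal c4) in R as e4; simpl in *; lra.
Qed.

Theorem lemma3p1 (U : R * R -> Prop) (x : R * R -> V4) :
  lorentz_surface U x -> quasi_minimal U x -> parallel_mean_curvature U x ->
  flat_normal_connection U x.
Proof.
  intros [U_open [x_smooth x_lorentz]] Hqm Hpar xi Hxi Hnor p Hp.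
  assert (Hd : forall q, U q -> gdet x q <> 0)
    by (intros q Hq; specialize (x_lorentz q Hq); unfold lorentzian_at in *; lra).
  destruct (Hqm p Hp) as [Hnz HH]; destruct (Hnor p Hp) as [nu nv].
  rewrite (ricci_equation U U_open x x_smooth Hd xi p Hxi Hnor Hp),
    (shape_comm_at_vanishes x p (xi p) (Hd p Hp) Hnz HH
       (shape_comm_at_Hmc U x p U_open x_smooth Hd Hpar Hp) nu nv).
  apply V4_ext; simpl; ring.
Qed.
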